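(* Consider any correct node-based data structure for the 2D $(+,\min)$ update-query problem over an $N\times M$ matrix, as described in the context, in which $S_U,S_C,S_Q$ are fixed functions of the submatrix. Then some update or some query must visit at least $\frac{NM}{N+M}$ nodes; more precisely, there is a submatrix $B$ such that $|S_U(B)|+|S_C(B)|\ge\frac{NM}{N+M}$ or $|S_Q(B)|\ge\frac{NM}{N+M}$.
   Context: Coordinates $G=\{0,\dots,N-1\}\times\{0,\dots,M-1\}$; a submatrix $[x_0,x_1][y_0,y_1]$ is the set of $(x,y)$ with $x_0\le x\le x_1$, $y_0\le y\le y_1$. The 2D $(+,\min)$ update-query problem: after initialization with a real matrix $A$, an update $U(B,v)$ adds $v$ to every $A[x][y]$ with $(x,y)\in B$, and a query $Q(B)$ must return $\min_{(x,y)\in B}A[x][y]$ of the current matrix. A node-based data structure uses a family $\mathcal{N}$ of pairwise distinct nonempty subsets of $G$ (nodes) containing every singleton $\{(x,y)\}$. Each node $n$ stores a value $n_V$ and a lazy value $n_Z$; at initialization $n_V=\min_{(x,y)\in n}A[x][y]$ and $n_Z=0$. The structure is specified by fixed functions assigning to each submatrix $B$ sets $S_U(B),S_C(B),S_Q(B)\subseteq\mathcal{N}$ with $\bigcup_{n\in S_U(B)}n=B$ and $\bigcup_{n\in S_Q(B)}n=B$. The update $U(B,v)$ sets $n_Z\gets n_Z+v$ for every $n\in S_U(B)$ and may change $m_V$ (in any way) for every $m\in S_C(B)$; no other stored values change; it visits the nodes of $S_U(B)$ and $S_C(B)$. The query $Q(B)$ returns $\min_{n\in S_Q(B)}\big(n_V+\sum_{m\in\mathcal{N},\,m\supseteq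 n}m_Z\big)$ and visits the nodes of $S_Q(B)$. The structure is correct if, for every initial matrix and every sequence of updates and queries, every query returns the correct answer. *)

From HB Require Import structures.
From mathcomp Require Import all_boot all_order all_algebra.
From mathcomp Require Import reals.
Set Implicit Arguments. Unset Strict Implicit. Unset Printing Implicit Defensive.
Import Order.TTheory GRing.Theory Num.Theory.
Local Open Scope ring_scope.

(* Minimum of f over a finite set S (0 if S is empty; only used for nonempty S). *)
Definition setmin (R : realType) (T : finType) (S : {set T}) (f : T -> R) : R :=
  match [pick c in S] with
  | Some c0 => \big[Order.min/f c0]_(c in S) f c
  | None => 0
  end.

Notation cell N M := ('I_N * 'I_M)%type.

Definition rect (N M : nat) (x0 x1 : 'I_N) (y0 y1 : 'I_M) : {set cell N M} :=
  [set c : cell N M | ((x0 <= c.1 <= x1) && (y0 <= c.2 <= y1))%N].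

Definition is_submatrix (N M : nat) (B : {set cell N M}) : Prop :=
  exists (x0 x1 : 'I_N) (y0 y1 : 'I_M),
    (x0 <= x1)%N /\ (y0 <= y1)%N /\ B = rect x0 x1 y0 y1.

Inductive op (R : realType) (N M : nat) :=
  | Upd of {set cell N M} & R
  | Qry of {set cell N M}.

Definition op_submatrix (R : realType) (N M : nat) (o : op R N M) : Prop :=
  match o with @Upd _ _ _ B _ => is_submatrix B | @Qry _ _ _ B => is_submatrix B end.

(* Node family: nonempty subsets of G (distinct as elements of a set),
   containing every singleton. *)
Definition node_family (N M : nat) (Nd : {set {set cell N M}}) : Prop :=
  (forall n, n \in Nd -> n != set0) /\ (forall c : cell N M, [set c] \in Nd).

Definition valid_sets (N M : nat) (Nd : {set {set cell N M}})
  (SU SC SQ : {set cell N M} -> {set {set cell N M}}) (B : {set cell N M}) : Prop :=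
  [/\ SU B \subset Nd, SC B \subset Nd, SQ B \subset Nd,
      \bigcup_(n in SU B) n = B & \bigcup_(n in SQ B) n = B].

(* A0 : initial matrix; pre : operations already performed (history);
   A : current true matrix; V, Z : stored values n_V and lazy values n_Z.
   On U(B,v): n_Z += v for n in S_U(B); for m in S_C(B), m_V is replaced by an
   arbitrary value chosen by the structure (the function chg, which may depend on
   the initial matrix and the whole history of operations including the current
   one); nothing else changes. *)
Fixpoint run_correct (R : realType) (N M : nat) (Nd : {set {set cell N M}})
  (SU SC SQ : {set cell N M} -> {set {set cell N M}})
  (chg : (cell N M -> R) -> seq (op R N M) -> {set cell N M} -> R)
  (A0 : cell N M -> R) (pre : seq (op R N M)) (A : cell N M -> R)
  (V Z : {set cell N M} -> R) (os : seq (op R N M)) : Prop :=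
  match os with
  | [::] => True
  | @Qry _ _ _ B :: os' =>
      setmin (SQ B) (fun n => V n + \sum_(m in Nd | n \subset m) Z m) = setmin B A
      /\ run_correct Nd SU SC SQ chg A0 (rcons pre (@Qry R N M B)) A V Z os'
  | @Upd _ _ _ B v :: os' =>
      let pre' := rcons pre (@Upd R N M B v) in
      run_correct Nd SU SC SQ chg A0 pre'
        (fun c => if c \in B then A c + v else A c)
        (fun n => if n \in SC B then chg A0 pre' n else V n)
        (fun n => if n \in SU B then Z n + v else Z n) os'
  end.

Definition ds_correct (R : realType) (N M : nat) (Nd : {set {set cell N M}})
  (SU SC SQ : {set cell N M} -> {set {set cell N M}})
  (chg : (cell N M -> R) -> seq (op R N M) -> {set cell N M} -> R) : Prop :=
  forall (A0 : cell N M -> R) (os : seq (op R N M)),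
    foldr (fun o P => op_submatrix o /\ P) True os ->
    run_correct Nd SU SC SQ chg A0 [::] A0 (fun n => setmin n A0) (fun _ => 0) os.

From HB Require Import structures.
From mathcomp Require Import all_boot all_order all_algebra.
From mathcomp Require Import reals.
From mathcomp Require Import lra.
Set Implicit Arguments. Unset Strict Implicit. Unset Printing Implicit Defensive.
Import Order.TTheory GRing.Theory Num.Theory.
Local Open Scope ring_scope.

(** Pick for every cell (i, j) a query node n of column j containing it.
    If n does not lie inside row i, it belongs to S_C(row i): otherwise, on
    the matrix that is 0 at (i, j) and 1 elsewhere, adding 2 to row i leaves
    n_V = 0 and adds no lazy value above n (update nodes of row i lie inside
    row i), so the query of column j answers 0 instead of 1.  For fixed i the
    nodes leaving row i are distinct (they lie in distinct columns), and for
    fixed j the nodes staying in their row are distinct (they lie in distinct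
    rows).  Hence NM <= sum_i |S_C(row i)| + sum_j |S_Q(col j)|, and some row
    or column carries at least NM / (N + M). *)

Lemma card_prod_split (I J : finType) (g : I -> J -> bool) :
  (#|I| * #|J| = \sum_i #|[set j | ~~ g i j]| + \sum_j #|[set i | g i j]|)%N.
Proof.
have -> : (\sum_j #|[set i | g i j]| = \sum_i #|[set j | g i j]|)%N.
  under eq_bigr do rewrite -sum1dep_card.
  under [RHS]eq_bigr do rewrite -sum1dep_card.
  by rewrite (exchange_big_dep predT).
rewrite -big_split /= -sum_nat_const; apply: eq_bigr => i _.
rewrite -(cardsC [set j | g i j]) addnC; congr (_ + _)%N.
by apply: eq_card => j; rewrite !inE.
Qed.

Lemma exists_ge_average (I J : finType) (x : I -> nat) (y : J -> nat) (n : nat) :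
  (0 < #|I|)%N -> (0 < #|J|)%N -> (n <= \sum_i x i + \sum_j y j)%N ->
  (exists i, n <= (#|I| + #|J|) * x i)%N \/ (exists j, n <= (#|I| + #|J|) * y j)%N.
Proof.
move=> I_gt0 J_gt0 n_le.
have [i xi_max] := bigop.eq_bigmax x I_gt0.
have [j yj_max] := bigop.eq_bigmax y J_gt0.
have sum_le (K : finType) (z : K -> nat) : (\sum_k z k <= #|K| * \max_k z k)%N.
  by rewrite -sum_nat_const leq_sum // => k _; apply: leq_bigmax.
have {}n_le : (n <= #|I| * x i + #|J| * y j)%N.
  by rewrite -xi_max -yj_max (leq_trans n_le) // leq_add.
have [yx | /ltnW xy] := leqP (y j) (x i); [left; exists i | right; exists j];
  by rewrite (leq_trans n_le) // mulnDl leq_add // leq_mul2l ?yx ?xy orbT.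
Qed.

Lemma ler_nat_div (R : numFieldType) (a b k : nat) :
  (0 < b)%N -> (a <= b * k)%N -> a%:R / b%:R <= k%:R :> R.
Proof. by move=> b_gt0 a_le; rewrite ler_pdivrMr ?ltr0n // -natrM ler_nat mulnC. Qed.

Lemma setmin_le (R : realType) (T : finType) (S : {set T}) (f : T -> R) x :
  x \in S -> setmin S f <= f x.
Proof.
move=> xS; rewrite /setmin; case: pickP => [c0 _|S0]; first exact: bigmin_le_cond.
by have := S0 x; rewrite xS.
Qed.

Lemma le_setmin (R : realType) (T : finType) (S : {set T}) (f : T -> R) x a :
  x \in S -> (forall y, y \in S -> a <= f y) -> a <= setmin S f.
Proof.
move=> xS a_le; rewrite /setmin; case: pickP => [c0 c0S|S0].
  by apply: le_bigmin => //; apply: a_le.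
by have := S0 x; rewrite xS.
Qed.

Definition row_cells (N M : nat) (i : 'I_N) : {set cell N M} := [set c | c.1 == i].
Definition col_cells (N M : nat) (j : 'I_M) : {set cell N M} := [set c | c.2 == j].

Lemma row_submatrix (N M : nat) (i : 'I_N) : (0 < M)%N -> is_submatrix (row_cells M i).
Proof.
move=> M_gt0; have lastM : (M.-1 < M)%N by rewrite prednK.
exists i, i, (Ordinal M_gt0), (Ordinal lastM); split => //; split => //=.
apply/setP => c; rewrite !inE /=.
have -> : (c.2 <= M.-1)%N by rewrite -ltnS prednK.
by rewrite andbT -eqn_leq eq_sym.
Qed.

Lemma col_submatrix (N M : nat) (j : 'I_M) : (0 < N)%N -> is_submatrix (col_cells N j).
Proof.
move=> N_gt0; have lastN : (N.-1 < N)%N by rewrite prednK.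
exists (Ordinal N_gt0), (Ordinal lastN), j, j; split => //; split => //=.
apply/setP => c; rewrite !inE /=.
have -> : (c.1 <= N.-1)%N by rewrite -ltnS prednK.
by rewrite -eqn_leq eq_sym.
Qed.

Section CorrectStructure.
Variables (R : realType) (N M : nat) (Nd : {set {set cell N M}}).
Variables (SU SC SQ : {set cell N M} -> {set {set cell N M}}).
Variable chg : (cell N M -> R) -> seq (op R N M) -> {set cell N M} -> R.
Hypothesis valid : forall B, is_submatrix B -> valid_sets Nd SU SC SQ B.
Hypothesis correct : ds_correct Nd SU SC SQ chg.

Lemma update_node_sub B n : is_submatrix B -> n \in SU B -> n \subset B.
Proof. by case/valid=> _ _ _ coverB _ nU; rewrite -coverB; apply: bigcup_sup nU. Qed.

Lemma query_node_sub B n : is_submatrix B -> n \in SQ B -> n \subset B.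
Proof. by case/valid=> _ _ _ _ coverB nQ; rewrite -coverB; apply: bigcup_sup nQ. Qed.

Definition query_node B c : {set cell N M} := odflt set0 [pick n in SQ B | c \in n].

Lemma query_nodeP B c :
  is_submatrix B -> c \in B -> query_node B c \in SQ B /\ c \in query_node B c.
Proof.
case/valid=> _ _ _ _ coverB; rewrite -{1}coverB => /bigcupP[n nQ cn].
by rewrite /query_node; case: pickP => [m /andP[] | /(_ n)] //; rewrite nQ cn.
Qed.

Lemma straddling_query_node_in_SC B B' n c :
  is_submatrix B -> is_submatrix B' -> n \in SQ B' -> c \in n -> c \in B ->
  ~~ (n \subset B) -> n \in SC B.
Proof.
move=> subB subB' nQ cn cB n_out; apply: contraT => nC.
pose A0 (d : cell N M) : R := if d == c then 0 else 1.
have /= [] := @correct A0 [:: @Upd R N M B 2; @Qry R N M B'].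
  by do !split.
move=> answer _.
have no_lazy (m : {set cell N M}) : n \subset m -> m \notin SU B.
  move=> nm; apply: (contraNN _ n_out) => mU.
  exact: subset_trans nm (update_node_sub subB mU).
have cB' : c \in B' by apply: subsetP (query_node_sub subB' nQ) c cn.
have true_ge1 : 1 <= setmin B' (fun d => if d \in B then A0 d + 2 else A0 d).
  apply: le_setmin cB' _ => d _; rewrite /A0.
  by case: eqP => [->|_]; [rewrite cB | case: (d \in B)]; lra.
suff : 1 <= 0 :> R by rewrite ler10.
apply: le_trans true_ge1 _; rewrite -answer.
apply: le_trans (setmin_le _ nQ) _; rewrite (negbTE nC) big1 ?addr0.
  by apply: le_trans (setmin_le _ cn) _; rewrite /A0 eqxx.
by move=> m /andP[_ nm]; rewrite (negbTE (no_lazy m nm)).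
Qed.

Hypotheses (N_gt0 : (0 < N)%N) (M_gt0 : (0 < M)%N).

Definition cell_node i j := query_node (col_cells N j) (i, j).

Lemma cell_nodeP i j :
  cell_node i j \in SQ (col_cells N j) /\ (i, j) \in cell_node i j.
Proof. by apply: query_nodeP (col_submatrix j N_gt0) _; rewrite inE. Qed.

Lemma cell_node_sub_col i j : cell_node i j \subset col_cells N j.
Proof. exact: query_node_sub (col_submatrix j N_gt0) (cell_nodeP i j).1. Qed.

Lemma card_leaving_row i :
  (#|[set j | ~~ (cell_node i j \subset row_cells M i)]| <= #|SC (row_cells M i)|)%N.
Proof.
have inj : {in [set j | ~~ (cell_node i j \subset row_cells M i)] &, injective (cell_node i)}.
  move=> j1 j2 _ _ same_node; have [_] := cell_nodeP i j1; rewrite same_node.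
  by move/(subsetP (cell_node_sub_col i j2)); rewrite inE => /eqP.
rewrite -(card_in_imset inj); apply/subset_leq_card/subsetP => n /imsetP[j].
rewrite inE => leaving ->; have [nQ ij_in] := cell_nodeP i j.
apply: (straddling_query_node_in_SC (row_submatrix i M_gt0)
  (col_submatrix j N_gt0) nQ ij_in _ leaving).
by rewrite inE.
Qed.

Lemma card_staying_col j :
  (#|[set i | cell_node i j \subset row_cells M i]| <= #|SQ (col_cells N j)|)%N.
Proof.
have inj : {in [set i | cell_node i j \subset row_cells M i] &, injective (cell_node^~ j)}.
  move=> i1 i2 _; rewrite inE => staying same_node.
  have [_] := cell_nodeP i1 j; rewrite same_node.
  by move/(subsetP staying); rewrite inE => /eqP.
rewrite -(card_in_imset inj); apply/subset_leq_card/subsetP => n /imsetP[i _ ->].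
exact: (cell_nodeP i j).1.
Qed.

Lemma grid_count :
  (N * M <= \sum_i #|SC (row_cells M i)| + \sum_j #|SQ (col_cells N j)|)%N.
Proof.
have := card_prod_split (fun i j => cell_node i j \subset row_cells M i).
rewrite !card_ord => ->; apply: leq_add; apply: leq_sum => k _.
  exact: card_leaving_row.
exact: card_staying_col.
Qed.

End CorrectStructure.

Theorem theorem5 (R : realType) (N M : nat) (hN : (0 < N)%N) (hM : (0 < M)%N)
  (Nd : {set {set ('I_N * 'I_M)}})
  (SU SC SQ : {set ('I_N * 'I_M)} -> {set {set ('I_N * 'I_M)}})
  (chg : (('I_N * 'I_M) -> R) -> seq (op R N M) -> {set ('I_N * 'I_M)} -> R) :
  node_family Nd ->
  (forall B, is_submatrix B -> valid_sets Nd SU SC SQ B) ->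
  ds_correct Nd SU SC SQ chg ->
  exists B : {set ('I_N * 'I_M)}, is_submatrix B /\
    (((N * M)%:R / (N + M)%:R : R) <= (#|SU B| + #|SC B|)%:R
     \/ ((N * M)%:R / (N + M)%:R : R) <= #|SQ B|%:R).
Proof.
move=> _ valid correct; have NM_gt0 : (0 < N + M)%N by rewrite addn_gt0 hN.
have := exists_ge_average _ _ (grid_count valid correct hN hM).
rewrite !card_ord => /(_ hN hM) [[i row_heavy] | [j col_heavy]].
- exists (row_cells M i); split; first exact: row_submatrix.
  left; apply: ler_nat_div (leq_trans row_heavy _) => //.
  by rewrite leq_mul2l leq_addl orbT.
- exists (col_cells N j); split; first exact: col_submatrix.
  by right; apply: ler_nat_div.
Qed.
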